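(* Let $\mathcal{S} \subseteq M_n$ be a quantum graph. Then $\mathcal{S}$ is $(n-1)$-connected if and only if $A\mathcal{S}B \neq \{0\}$ for every $A,B \in M_n\setminus\{0\}$.
   Context: A quantum graph on $M_n$ is a linear subspace $\mathcal{S}\subseteq M_n$ closed under adjoints and containing $I_n$. $A\mathcal{S}B=\{AXB: X\in\mathcal{S}\}$. A quantum graph $\mathcal{T}\subseteq M_N$ is connected if $\mathcal{T}^m=M_N$ for some $m\in\mathbb{N}$ (powers are spans of products); otherwise disconnected. For a projection $P\in M_n$, $(I_n-P)\mathcal{S}(I_n-P)$ is regarded as a quantum graph in $(I_n-P)M_n(I_n-P)\cong M_{n-\operatorname{rank}(P)}$. A projection $P$ is a separator of $\mathcal{S}$ if $(I_n-P)\mathcal{S}(I_n-P)$ is either disconnected or $1$-dimensional; $\mathcal{S}$ is $k$-connected if every separator has rank at least $k$. *)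

From HB Require Import structures.
From mathcomp Require Import all_boot all_order all_algebra.
From mathcomp Require Import reals.
From mathcomp.real_closed Require Import complex.
Set Implicit Arguments. Unset Strict Implicit. Unset Printing Implicit Defensive.
Import Order.TTheory GRing.Theory Num.Theory.
Local Open Scope ring_scope.

Section QG.
Variables (R : realType) (n : nat).
Local Notation C := (R[i]).
Local Notation M := ('M[C]_n).

Definition adjmx (X : M) : M := (map_mx Num.conj X)^T.

Definition quantum_graph (S : {vspace M}) : Prop :=
  (forall X, X \in S -> adjmx X \in S) /\ (1%:M \in S).

Definition projection (P : M) : Prop := P *m P = P /\ adjmx P = P.

Definition sandwich (A B : M) (S : {vspace M}) : {vspace M} :=
  (linfun (fun X : M => A *m X *m B) @: S)%VS.

Definition in_power (T : {vspace M}) (m : nat) (Y : M) : Prop :=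
  exists K (c : 'I_K -> C) (X : 'I_K -> 'I_m -> M),
    (forall k j, X k j \in T) /\ Y = \sum_(k < K) c k *: \prod_(j < m) X k j.

(* Connectedness of the compression T = Q S Q, regarded as a quantum graph in
   the corner algebra Q M_n Q (~ M_(rank Q)) whose full algebra is Q M_n Q:
   T^m = Q M_n Q for some m >= 1. *)
Definition corner_connected (Q : M) (T : {vspace M}) : Prop :=
  exists2 m, (0 < m)%N &
    forall Y : M, (exists Z : M, Y = Q *m Z *m Q) <-> in_power T m Y.

Definition separator (S : {vspace M}) (P : M) : Prop :=
  projection P /\
  let Q := 1%:M - P in
  let T := sandwich Q Q S in
  ~ corner_connected Q T \/ \dim T = 1%N.

Definition k_connected (S : {vspace M}) (k : nat) : Prop :=
  forall P : M, separator S P -> (k <= \rank P)%N.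

End QG.

(* If ASB = 0 for nonzero A and B, take a row a of A and a column b of B with
   aSb = 0; as I is in S, a is orthogonal to b^*.  Let Q be the orthogonal
   projection onto span(a^*, b) and P = I - Q, of rank n - 2.  Every element of
   QSQ, hence every product of such elements, has a as a left eigenvector,
   whereas the corner element a^* b^* does not: QSQ is disconnected and P is a
   separator of rank n - 2.
   Conversely, if P is a separator of rank at most n - 2, then Q = I - P has
   rank at least 2 and the hypothesis makes T = QSQ irreducible on the corner:
   aYb <> 0 for some Y in T whenever a = aQ and b = Qb are nonzero.  This rules
   out dim T = 1, and makes T connected: the powers of T increase (Q is in T)
   until they stabilise at an algebra, which by Burnside's theorem is all of
   QM_nQ.  Burnside's theorem is proved by shrinking the rank of a nonzero
   element of the algebra down to 1 and moving rank-one elements around by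
   transitivity. *)

From HB Require Import structures.
From mathcomp Require Import all_boot all_order all_algebra falgebra.
From mathcomp Require Import reals.
From mathcomp.real_closed Require Import complex.
From mathcomp Require Import zify.
Set Implicit Arguments. Unset Strict Implicit. Unset Printing Implicit Defensive.
Import Order.TTheory GRing.Theory Num.Theory.
Local Open Scope ring_scope.
Local Open Scope sesquilinear_scope.

Section MatrixFacts.
Variable F : fieldType.

Lemma row_free_rV n (v : 'rV[F]_n) : row_free v = (v != 0).
Proof. by rewrite /row_free rank_rV; case: (v != 0). Qed.

Lemma mulmx_rV_eq0 m n (A : 'M[F]_(m, 1)) (v : 'rV[F]_n) :
  v != 0 -> (A *m v == 0) = (A == 0).
Proof. by rewrite -row_free_rV => /mulmx_free_eq0. Qed.

Lemma mulmx_cV_eq0 m n (u : 'cV[F]_m) (A : 'M[F]_(1, n)) :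
  u != 0 -> (u *m A == 0) = (A == 0).
Proof.
by move=> nzu; rewrite -trmx_eq0 trmx_mul mulmx_rV_eq0 ?trmx_eq0.
Qed.

Lemma row_separator m n (W : 'M[F]_(m, n)) (y : 'rV_n) :
  ~~ (y <= W)%MS -> exists2 c : 'cV_n, W *m c = 0 & y *m c != 0.
Proof.
rewrite submxE => /rV0Pn[j nzj]; exists (cokermx W *m delta_mx j 0).
  by rewrite mulmxA mulmx_coker mul0mx.
by rewrite mulmxA -colE; apply/cV0Pn; exists 0; rewrite mxE.
Qed.

Lemma rank_ge2_annihilating_pair n (K : 'M[F]_n) : (2 <= \rank K)%N ->
  exists (c : 'cV_n) (d : 'rV_n), [/\ K *m c != 0, d *m K != 0 & d *m K *m c = 0].
Proof.
move=> rK; have /matrix0Pn[i [j nzKij]] : K != 0 by rewrite -mxrank_eq0 -lt0n ltnW.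
pose b : 'cV_n := K *m delta_mx j 0.
have nzb : b != 0 by apply/cV0Pn; exists i; rewrite /b -colE mxE.
have /row_subPn[k kerKk] : ~~ (kermx b <= kermx K)%MS.
  apply: contraTN rK => /mxrankS; rewrite !mxrank_ker -ltnNge.
  by have := rank_leq_col b; have := rank_leq_row K; lia.
exists (delta_mx j 0), (row k (kermx b)); split=> //.
  by apply: contra kerKk => /eqP dK0; apply/sub_kermxP.
by rewrite -mulmxA; apply/sub_kermxP; apply: row_sub.
Qed.

Lemma rank1_factor n (K : 'M[F]_n) : \rank K = 1%N ->
  exists (u : 'cV_n) (v : 'rV_n), [/\ K = u *m v, u != 0 & v != 0].
Proof.
move=> rK; have nzK : K != 0 by rewrite -mxrank_eq0 rK.
have /rowV0Pn[v vK nzv] := nzK.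
have Kv : (K <= v)%MS by rewrite -(geq_leqif (mxrank_leqif_sup vK)) rK rank_rV nzv.
have [u defK] := submxP Kv; exists u, v; split=> //.
by apply: contraNneq nzK => u0; rewrite defK u0 mul0mx.
Qed.

Lemma row_eigen_prod n (a : 'rV[F]_n) m (X : 'I_m -> 'M[F]_n) :
  (forall j, exists g, a *m X j = g *: a) -> exists g, a *m \prod_(j < m) X j = g *: a.
Proof.
elim: m X => [|m IHm] X aX; first by exists 1; rewrite big_ord0 scale1r; apply: mulmx1.
have [g1 aX0] := aX ord0; have [g2 aXs] := IHm _ (fun j => aX (lift ord0 j)).
by exists (g1 * g2); rewrite big_ord_recl -mulmxE mulmxA aX0 -scalemxAl aXs scalerA.
Qed.

End MatrixFacts.

Lemma memv_sum_vbasis (K : fieldType) (vT : vectType K) (U : {vspace vT})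
    (w : 'I_(\dim U) -> K) :
  \sum_i w i *: (vbasis U)`_i \in U.
Proof. by apply: memv_suml => i _; rewrite memvZ ?vbasis_mem ?memt_nth. Qed.

Lemma stablemx_eigenvector (C : numClosedFieldType) n (V G : 'M[C]_n) :
  V != 0 -> (V *m G <= V)%MS ->
  exists (w : 'rV_n) (l : C), [/\ w != 0, (w <= V)%MS & w *m G = l *: w].
Proof.
move=> nzV sVG; have rV_gt0 : (0 < \rank V)%N by rewrite lt0n mxrank_eq0.
have [a /eigenvalueP[v vG nzv]] := eigenvalue_closed (restrictmx V G) rV_gt0.
have /eigenvectorP[l /eigenspaceP wG] : stablemx (v *m row_base V) G.
  by rewrite -stablemx_restrict // vG scalemx_sub.
exists (v *m row_base V), l; split=> //.
  by rewrite mulmx_free_eq0 ?row_base_free.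
by rewrite (submx_trans (submxMl _ _)) ?eq_row_base.
Qed.

Section ConjTranspose.
Variable C : numClosedFieldType.

Lemma trmxC_mul m n p (A : 'M[C]_(m, n)) (B : 'M[C]_(n, p)) :
  (A *m B) ^t* = B ^t* *m A ^t*.
Proof. by rewrite trmx_mul map_mxM. Qed.

Lemma trmxCZ m n c (A : 'M[C]_(m, n)) : (c *: A) ^t* = c^* *: A ^t*.
Proof. by rewrite linearZ map_mxZ. Qed.

Lemma trmxCB m n (A B : 'M[C]_(m, n)) : (A - B) ^t* = A ^t* - B ^t*.
Proof. by rewrite linearB map_mxB. Qed.

Lemma trmxC1 n : (1%:M : 'M[C]_n) ^t* = 1%:M.
Proof. by rewrite trmx1 map_mx1. Qed.

Lemma mulmx_trmxC n (u : 'rV[C]_n) : u *m u ^t* = (dotmx u u)%:M.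
Proof. by rewrite [LHS]mx11_scalar dotmxE. Qed.

Definition rank1_proj n (u : 'rV[C]_n) : 'M[C]_n := (dotmx u u)^-1 *: (u ^t* *m u).

Lemma rank1_proj_adj n (u : 'rV[C]_n) : (rank1_proj u) ^t* = rank1_proj u.
Proof. by rewrite trmxCZ trmxC_mul trmxCK fmorphV /= geC0_conj ?dnorm_ge0. Qed.

Lemma rank1_proj_id n (u : 'rV[C]_n) : u != 0 -> u *m rank1_proj u = u.
Proof.
move=> nzu; have nu : dotmx u u != 0 by rewrite dnorm_eq0.
by rewrite -scalemxAr mulmxA mulmx_trmxC mul_scalar_mx scalerA mulVf ?scale1r.
Qed.

Lemma rank1_proj_orth n (u v : 'rV[C]_n) : v *m u ^t* = 0 -> v *m rank1_proj u = 0.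
Proof. by move=> vu; rewrite -scalemxAr mulmxA vu mul0mx scaler0. Qed.

Lemma mul_rank1_proj n (Q : 'M[C]_n) (u : 'rV[C]_n) :
  Q ^t* = Q -> u *m Q = u -> Q *m rank1_proj u = rank1_proj u.
Proof. by move=> adjQ uQ; rewrite -scalemxAr mulmxA -{1}adjQ -trmxC_mul uQ. Qed.

Lemma row_free_orthogonal n (a e : 'rV[C]_n) :
  a != 0 -> e != 0 -> a *m e ^t* = 0 -> row_free (col_mx a e).
Proof.
move=> nza nze ae.
have ea : e *m a ^t* = 0 by rewrite -[e]trmxCK -trmxC_mul ae trmx0 map_mx0.
rewrite -kermx_eq0; apply/rowV0P=> v /sub_kermxP; rewrite -[v]hsubmxK mul_row_col.
move=> v0; have /(congr1 (fun M => M *m a ^t*)) := v0.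
have /(congr1 (fun M => M *m e ^t*)) := v0.
rewrite /= !mulmxDl -!mulmxA ae ea !mulmx0 add0r addr0 !mul0mx !mulmx_trmxC !mul_mx_scalar.
move=> /eqP; rewrite scaler_eq0 dnorm_eq0 (negbTE nze) => /eqP ->.
move=> /eqP; rewrite scaler_eq0 dnorm_eq0 (negbTE nza) => /eqP ->.
by rewrite row_mx0.
Qed.

End ConjTranspose.

Definition corner_irreducible (F : fieldType) n (Q : 'M[F]_n) (T : {vspace 'M[F]_n}) :=
  forall (a : 'rV_n) (b : 'cV_n), a != 0 -> b != 0 -> a *m Q = a -> Q *m b = b ->
    exists2 X, X \in T & a *m X *m b != 0.

Section Burnside.
Variables (C : numClosedFieldType) (n : nat) (Q : 'M[C]_n) (A : {vspace 'M[C]_n}).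
Hypotheses (mulA : {in A &, forall X Y, X *m Y \in A}) (QA : Q \in A).
Hypotheses (mulQA : {in A, forall X, Q *m X = X}) (mulAQ : {in A, forall X, X *m Q = X}).
Hypothesis irrA : corner_irreducible Q A.

Let QQ : Q *m Q = Q := mulQA QA.

Lemma corner_row_transitive (a y : 'rV_n) :
  a != 0 -> a *m Q = a -> y *m Q = y -> exists2 X, X \in A & a *m X = y.
Proof.
move=> nza aQ yQ; pose W : 'M_(\dim A, n) := \matrix_i (a *m (vbasis A)`_i).
have [/submxP[w ->]|/row_separator[c Wc yc]] := boolP (y <= W)%MS.
  exists (\sum_i w 0 i *: (vbasis A)`_i); first exact: memv_sum_vbasis.
  rewrite mulmx_sumr mulmx_sum_row; apply: eq_bigr => i _.
  by rewrite rowK scalemxAr.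
have nzQc : Q *m c != 0 by apply: contra yc => /eqP Qc0; rewrite -yQ -mulmxA Qc0 mulmx0.
have QQc : Q *m (Q *m c) = Q *m c by rewrite mulmxA QQ.
have [X XA] := irrA nza nzQc aQ QQc.
rewrite mulmxA -(mulmxA a) mulAQ // (coord_vbasis XA) mulmx_sumr mulmx_suml.
case/negP; apply/eqP/big1 => i _; rewrite -scalemxAr -scalemxAl.
by have := congr1 (row i) Wc; rewrite row_mul rowK row0 => ->; rewrite scaler0.
Qed.

Lemma corner_col_transitive (b x : 'cV_n) :
  b != 0 -> Q *m b = b -> Q *m x = x -> exists2 X, X \in A & X *m b = x.
Proof.
move=> nzb Qb Qx; pose W : 'M_(\dim A, n) := \matrix_i ((vbasis A)`_i *m b)^T.
have [/submxP[w xW]|/row_separator[c Wc xc]] := boolP (x^T <= W)%MS.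
  exists (\sum_i w 0 i *: (vbasis A)`_i); first exact: memv_sum_vbasis.
  apply: trmx_inj.
  rewrite xW mulmx_sum_row mulmx_suml raddf_sum; apply: eq_bigr => i _.
  by rewrite rowK -scalemxAl /= linearZ.
have nzcQ : c^T *m Q != 0.
  by apply: contra xc => /eqP cQ0; rewrite -Qx -trmx_eq0 !trmx_mul trmxK mulmxA cQ0 mul0mx.
have cQQ : c^T *m Q *m Q = c^T *m Q by rewrite -mulmxA QQ.
have [X XA] := irrA nzcQ nzb cQQ Qb.
rewrite -(mulmxA _ Q) mulQA // (coord_vbasis XA) mulmx_sumr mulmx_suml.
case/negP; apply/eqP/big1 => i _; rewrite -scalemxAr -scalemxAl.
have := congr1 (row i) Wc; rewrite row_mul rowK row0 => /(congr1 trmx).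
by rewrite trmx_mul trmxK trmx0 mulmxA => ->; rewrite scaler0.
Qed.

(* An eigenvector of XK in the row space of K lies in the kernel of XK - l. *)
Lemma corner_rank_drop K : K \in A -> (2 <= \rank K)%N ->
  exists2 K', K' \in A & (0 < \rank K' < \rank K)%N.
Proof.
move=> KA rK; have nzK : K != 0 by rewrite -mxrank_eq0 -lt0n ltnW.
have [c [d [nzKc nzdK dKc]]] := rank_ge2_annihilating_pair rK.
have dKQ : d *m K *m Q = d *m K by rewrite -mulmxA mulAQ.
have QKc : Q *m (K *m c) = K *m c by rewrite mulmxA mulQA.
have [X XA nzdKXKc] := irrA nzdK nzKc dKQ QKc.
have [w [l [nzw wK wXK]]] : exists (w : 'rV_n) (l : C),
    [/\ w != 0, (w <= K)%MS & w *m (X *m K) = l *: w].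
  by apply: stablemx_eigenvector; rewrite // mulmxA submxMl.
have dK'c : d *m (K *m (X *m K - l%:M)) *m c = d *m K *m X *m (K *m c).
  rewrite mulmxBr mul_mx_scalar mulmxBr mulmxBl -scalemxAr -scalemxAl dKc.
  by rewrite scaler0 subr0 !mulmxA.
have wker : (w <= K :&: kermx (X *m K - l%:M))%MS.
  by rewrite sub_capmx wK; apply/sub_kermxP; rewrite mulmxBr mul_mx_scalar wXK subrr.
exists (K *m (X *m K - l%:M)).
  by rewrite mulmxBr mul_mx_scalar mulmxA memvB ?memvZ ?mulA.
apply/andP; split.
  rewrite lt0n mxrank_eq0; apply: contra nzdKXKc.
  by rewrite -dK'c => /eqP->; rewrite mulmx0 mul0mx.
rewrite -(mxrank_mul_ker K (X *m K - l%:M)) -[r in (r < _)%N]addn0 ltn_add2l.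
by apply: leq_trans (mxrankS wker); rewrite rank_rV nzw.
Qed.

Lemma corner_exists_rank1 : Q != 0 -> exists2 K, K \in A & \rank K = 1%N.
Proof.
have [r] := ubnP (\rank Q); rewrite -mxrank_eq0 -lt0n.
elim: r Q QA => // r IHr K KA rKr rK_gt0.
have [rK1|rK2] := leqP (\rank K) 1; first by exists K => //; apply/eqP; rewrite eqn_leq rK1.
have [K' K'A /andP[rK'_gt0 rK'K]] := corner_rank_drop KA rK2.
by apply: IHr K'A _ rK'_gt0; apply: leq_trans rK'K _.
Qed.

Lemma corner_rank1_mem (x : 'cV_n) (y : 'rV_n) :
  Q *m x = x -> y *m Q = y -> x *m y \in A.
Proof.
move=> Qx yQ; have [Q0|nzQ] := eqVneq Q 0.
  by rewrite -Qx Q0 !mul0mx mem0v.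
have [K KA /rank1_factor[u [v [defK nzu nzv]]]] := corner_exists_rank1 nzQ.
have Qu : Q *m u = u.
  apply/eqP; rewrite -subr_eq0 -(mulmx_rV_eq0 _ nzv) mulmxBl -mulmxA -defK.
  by rewrite mulQA // subrr.
have vQ : v *m Q = v.
  apply/eqP; rewrite -subr_eq0 -(mulmx_cV_eq0 _ nzu) mulmxBr mulmxA -defK.
  by rewrite mulAQ // subrr.
have [X XA Xu] := corner_col_transitive nzu Qu Qx.
have [Y YA vY] := corner_row_transitive nzv vQ yQ.
by rewrite -Xu -vY -mulmxA (mulmxA u) -defK !mulA.
Qed.

Lemma corner_mem Z : Q *m Z *m Q \in A.
Proof.
rewrite [Z]matrix_sum_delta mulmx_sumr mulmx_suml; apply: memv_suml => i _.
rewrite mulmx_sumr mulmx_suml; apply: memv_suml => j _.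
rewrite -scalemxAr -scalemxAl memvZ // -(mul_delta_mx (0 : 'I_1)) -!mulmxA mulmxA.
by apply: corner_rank1_mem; rewrite ?mulmxA ?QQ // -mulmxA QQ.
Qed.

End Burnside.

Lemma corner_irreducible_dim_neq1 (F : fieldType) n (Q : 'M[F]_n) (T : {vspace 'M[F]_n}) :
  Q *m Q = Q -> (2 <= \rank Q)%N -> Q \in T -> corner_irreducible Q T -> \dim T != 1%N.
Proof.
move=> QQ rQ QT irrT; apply/eqP => dimT1.
have nzQ : Q != 0 by rewrite -mxrank_eq0 -lt0n ltnW.
have defT : <[Q]>%VS = T.
  by apply/eqP; rewrite -(dimv_leqif_eq _).2 ?dim_vline ?nzQ ?dimT1 // -memvE.
have [c [d [nzQc nzdQ dQc]]] := rank_ge2_annihilating_pair rQ.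
have dQQ : d *m Q *m Q = d *m Q by rewrite -mulmxA QQ.
have QQc : Q *m (Q *m c) = Q *m c by rewrite mulmxA QQ.
have [X] := irrT _ _ nzdQ nzQc dQQ QQc; rewrite -defT => /vlineP[g ->].
by rewrite -scalemxAr -scalemxAl mulmxA !dQQ dQc scaler0 eqxx.
Qed.

Section Sandwich.
Variables (R : realType) (n : nat).
Implicit Types (A B X Y : 'M[R[i]]_n) (S : {vspace 'M[R[i]]_n}).

Lemma sandwich_lfunE A B X : linfun (fun Z : 'M_n => A *m Z *m B) X = A *m X *m B.
Proof. by rewrite -[fun Z => _]/(mulmxr B \o mulmx A)%FUN lfunE. Qed.

Lemma sandwichP A B S Y :
  reflect (exists2 X, X \in S & Y = A *m X *m B) (Y \in sandwich A B S).
Proof.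
apply: (iffP memv_imgP) => [[X XS ->]|[X XS ->]]; exists X; rewrite ?sandwich_lfunE //.
Qed.

Lemma mem_sandwich A B S X : X \in S -> A *m X *m B \in sandwich A B S.
Proof. by move=> XS; apply/sandwichP; exists X. Qed.

Lemma sandwich_eq0P A B S :
  reflect {in S, forall X, A *m X *m B = 0} (sandwich A B S == 0%VS).
Proof.
rewrite -lkerE; apply: (iffP subvP) => [SAB X XS|SAB X XS].
  by apply/eqP; rewrite -sandwich_lfunE -memv_ker SAB.
by rewrite memv_ker sandwich_lfunE SAB.
Qed.

Lemma sandwich_neq0P A B S :
  reflect (exists2 X, X \in S & A *m X *m B != 0) (sandwich A B S != 0%VS).
Proof.
rewrite -lkerE; apply: (iffP (@subvPn _ _ S _)) => -[X XS].
  by rewrite memv_ker sandwich_lfunE; exists X.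
by exists X; rewrite // memv_ker sandwich_lfunE.
Qed.

End Sandwich.

Lemma corner_irreducible_sandwich (R : realType) n (S : {vspace 'M[R[i]]_n}) (Q : 'M_n) :
  (forall A B : 'M_n, A != 0 -> B != 0 -> sandwich A B S != 0%VS) ->
  corner_irreducible Q (sandwich Q Q S).
Proof.
move=> SAB a b nza nzb aQ Qb; have nzba : b *m a != 0 by rewrite mulmx_cV_eq0.
have /sandwich_neq0P[X XS nzbaXba] := SAB _ _ nzba nzba.
exists (Q *m X *m Q); first exact: mem_sandwich.
rewrite !mulmxA aQ -mulmxA Qb; apply: contra_neq nzbaXba => aXb0.
have -> : b *m a *m X *m (b *m a) = b *m (a *m X *m b) *m a by rewrite !mulmxA.
by rewrite aXb0 mulmx0 mul0mx.
Qed.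

Lemma sandwich_eq0_row_col (R : realType) n (S : {vspace 'M[R[i]]_n}) (A B : 'M_n) :
  A != 0 -> B != 0 -> sandwich A B S = 0%VS ->
  exists (a : 'rV_n) (b : 'cV_n), [/\ a != 0, b != 0 & {in S, forall X, a *m X *m b = 0}].
Proof.
move=> /matrix0Pn[i [k nzAik]] /matrix0Pn[l [j nzBlj]] /eqP/sandwich_eq0P ASB0.
exists (row i A), (col j B); split.
- by apply/rV0Pn; exists k; rewrite mxE.
- by apply/cV0Pn; exists l; rewrite mxE.
- by move=> X XS; rewrite colE mulmxA -!row_mul ASB0 // mul0mx row0.
Qed.

Section InPower.
Variables (R : realType) (n : nat) (T : {vspace 'M[R[i]]_n}).

Lemma in_power0 m : in_power T m 0.
Proof. by exists 0%N, (fun=> 0), (fun _ _ => 0); split=> [[]|]; rewrite ?big_ord0. Qed.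

Lemma in_powerD m Y1 Y2 : in_power T m Y1 -> in_power T m Y2 -> in_power T m (Y1 + Y2).
Proof.
case=> K1 [c1 [X1 [XT1 ->]]] [K2 [c2 [X2 [XT2 ->]]]].
pose glue U (f1 : 'I_K1 -> U) (f2 : 'I_K2 -> U) k :=
  match split k with inl k1 => f1 k1 | inr k2 => f2 k2 end.
exists (K1 + K2)%N, (glue _ c1 c2), (glue _ X1 X2); split.
  by move=> k j; rewrite /glue; case: (split k).
by rewrite big_split_ord /glue; congr (_ + _); apply: eq_bigr => k _;
  [rewrite (unsplitK (inl k)) | rewrite (unsplitK (inr k))].
Qed.

Lemma in_powerZ m a Y : in_power T m Y -> in_power T m (a *: Y).
Proof.
case=> K [c [X [XT ->]]]; exists K, (fun k => a * c k), X; split=> //.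
by rewrite scaler_sumr; apply: eq_bigr => k _; rewrite scalerA.
Qed.

Lemma in_power_sum m (I : finType) (Y : I -> 'M[R[i]]_n) :
  (forall i, in_power T m (Y i)) -> in_power T m (\sum_i Y i).
Proof. by move=> YT; apply: big_ind => //; [apply: in_power0 | apply: in_powerD]. Qed.

End InPower.

Section Powers.
Variables (R : realType) (n : nat) (T : {vspace 'M[R[i]]_n.+1}).

Lemma memv_prod_expv m (X : 'I_m -> 'M[R[i]]_n.+1) :
  (forall j, X j \in T) -> \prod_(j < m) X j \in (T ^+ m)%VS.
Proof.
elim: m X => [|m IHm] X XT; first by rewrite big_ord0 expv0 memv_line.
by rewrite big_ord_recl expvSl memv_mul // IHm.
Qed.

Lemma in_powerMl m X Y : X \in T -> in_power T m Y -> in_power T m.+1 (X * Y).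
Proof.
move=> XT [K [c [Xs [XsT ->]]]].
exists K, c, (fun k j => if unlift ord0 j is Some j' then Xs k j' else X); split.
  by move=> k j; case: (unlift ord0 j).
rewrite mulr_sumr; apply: eq_bigr => k _; rewrite -scalerAr big_ord_recl unlift_none.
by congr (_ *: (_ * _)); apply: eq_bigr => j _; rewrite liftK.
Qed.

Lemma in_powerP m Y : in_power T m Y <-> Y \in (T ^+ m)%VS.
Proof.
split=> [[K [c [X [XT ->]]]]|].
  by apply: memv_suml => k _; rewrite memvZ // memv_prod_expv.
elim: m Y => [|m IHm] Y.
  rewrite expv0 => /vlineP[a ->]; exists 1%N, (fun=> a), (fun _ _ => 0).
  by split=> [_ [] //|]; rewrite big_ord1 big_ord0.
rewrite expvSl unlock => /coord_span ->.
apply: in_power_sum => i; apply: in_powerZ.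
set s := allpairs_tuple _ _ _.
have /allpairsP[[X Y'] [/= /vbasis_mem XT /vbasis_mem Y'T ->]] : s`_i \in s.
  by rewrite mem_nth // size_tuple.
by apply: in_powerMl; last apply: IHm.
Qed.

End Powers.

Lemma subv_chain_stable (K : fieldType) (vT : vectType K) (V : nat -> {vspace vT}) :
  (forall k, (V k <= V k.+1)%VS) -> exists k, V k = V k.+1.
Proof.
move=> incV; pose d := \dim {:vT}.
have [/existsP[k /eqP Vk]|] := boolP [exists k : 'I_d.+1, V k == V k.+1].
  by exists k.
rewrite negb_exists => /forallP neqV.
suff dimV : forall k, (k <= d.+1)%N -> (k <= \dim (V k))%N.
  by have := dimV _ (leqnn _); rewrite leqNgt ltnS dimvS ?subvf.
elim=> // k IHk lt_k; apply: leq_ltn_trans (IHk (ltnW lt_k)) _.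
by rewrite ltn_neqAle (dimv_leqif_eq (incV k)).2 (negbTE (neqV (Ordinal lt_k))) dimvS.
Qed.

Lemma corner_connected_of_irreducible (R : realType) n (Q : 'M[R[i]]_n)
    (T : {vspace 'M[R[i]]_n}) :
  Q *m Q = Q -> Q \in T -> (T <= sandwich Q Q fullv)%VS -> corner_irreducible Q T ->
  corner_connected Q T.
Proof.
(* Powers of subspaces need the algebra structure of 'M_n.+1; 'M_0 is trivial. *)
case: n Q T => [|n] Q T QQ QT TQ irrT.
  exists 1%N => // Y; split=> _; first by rewrite [Y]flatmx0; apply: in_power0.
  by exists Y; rewrite [LHS]flatmx0 [RHS]flatmx0.
have cornerE Y : Y \in sandwich Q Q fullv -> Q *m Y = Y /\ Y *m Q = Y.
  by case/sandwichP=> Z _ ->; rewrite !mulmxA QQ -!mulmxA QQ.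
pose V k := (T ^+ k.+1)%VS.
have VQ k : (V k <= sandwich Q Q fullv)%VS.
  elim: k => [|k IHk] //; rewrite /V expvSl; apply/prodvP=> X Y.
  move=> /(subvP TQ)/cornerE[QX _] /(subvP IHk)/cornerE[_ YQ].
  by apply/sandwichP; exists (X * Y); rewrite ?memvf // -mulmxE !mulmxA QX -mulmxA YQ.
have incV k : (V k <= V k.+1)%VS.
  apply/subvP=> Y YV; have [_ YQ] := cornerE _ (subvP (VQ k) _ YV).
  by rewrite /V expvSr -YQ mulmxE memv_mul.
have [k Vk] := subv_chain_stable incV.
pose A := V k.
have AT j : (A * T ^+ j)%VS = A.
  elim: j => [|j IHj]; first by rewrite expv0 prodv1.
  by rewrite expvSr prodvA IHj -expvSr -/(V k.+1) -Vk.
have mulA : {in A &, forall X Y, X *m Y \in A}.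
  by move=> X Y XA YA; rewrite -(AT k.+1) mulmxE memv_mul.
have TA : (T <= A)%VS.
  by rewrite /A; elim: (k) => [|j]; [apply: subvv | move/subv_trans; apply].
have irrA : corner_irreducible Q A.
  move=> a b nza nzb aQ Qb; have [X /(subvP TA) XA] := irrT a b nza nzb aQ Qb.
  by exists X.
have AQ X : X \in A -> Q *m X = X /\ X *m Q = X by move/(subvP (VQ k))/cornerE.
exists k.+1 => // Y; rewrite in_powerP; split=> [[Z ->]|YA].
  apply: (corner_mem mulA (subvP TA _ QT) _ _ irrA) => X /AQ[] //.
by exists Y; have [QY YQ] := AQ Y YA; rewrite QY YQ.
Qed.

Lemma not_corner_connected_eigenrow (R : realType) n (Q : 'M[R[i]]_n) (T : {vspace 'M_n})
    (a : 'rV_n) (b : 'cV_n) (Z : 'M_n) :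
  a *m b = 0 -> {in T, forall Y, exists g, a *m Y = g *: a} ->
  a *m (Q *m Z *m Q) *m b != 0 -> ~ corner_connected Q T.
Proof.
move=> ab aT nzZ [m _ /(_ (Q *m Z *m Q))[/(_ (ex_intro _ Z erefl))]].
move=> [K [c [X [XT QZQ]]]] _; move: nzZ; rewrite QZQ mulmx_sumr mulmx_suml.
case/eqP; apply: big1 => k _; rewrite -scalemxAr.
have [g ->] := row_eigen_prod (fun j => aT _ (XT k j)).
by rewrite -!scalemxAl ab !scaler0.
Qed.

Lemma separator_of_annihilated (R : realType) n (S : {vspace 'M[R[i]]_n})
    (a : 'rV_n) (b : 'cV_n) :
  1%:M \in S -> a != 0 -> b != 0 -> {in S, forall X, a *m X *m b = 0} ->
  exists2 P, separator S P & (\rank P + 2 <= n)%N.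
Proof.
move=> S1 nza nzb aSb; have ab : a *m b = 0 by rewrite -(aSb _ S1) mulmx1.
pose e := b ^t*; have eE : e ^t* = b by apply: trmxCK.
have nze : e != 0 by apply: contraNneq nzb => e0; rewrite -eE e0 trmx0 map_mx0.
have ae : a *m e ^t* = 0 by rewrite eE.
have ea : e *m a ^t* = 0 by rewrite /e -trmxC_mul ab trmx0 map_mx0.
pose Q := rank1_proj a + rank1_proj e.
have adjQ : Q ^t* = Q by rewrite linearD map_mxD !rank1_proj_adj.
have aQ : a *m Q = a by rewrite mulmxDr rank1_proj_id // rank1_proj_orth // addr0.
have eQ : e *m Q = e by rewrite mulmxDr rank1_proj_orth // rank1_proj_id // add0r.
have QQ : Q *m Q = Q by rewrite {2}/Q mulmxDr !mul_rank1_proj.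
have Qb : Q *m b = b by rewrite -eE -{1}adjQ -trmxC_mul eQ.
pose P := 1%:M - Q; have QE : 1%:M - P = Q by rewrite /P opprB addrC subrK.
exists P; last first.
  have : (col_mx a e <= kermx P)%MS.
    by apply/sub_kermxP; rewrite mul_col_mx !mulmxBr !mulmx1 aQ eQ !subrr col_mx0.
  move/mxrankS; rewrite mxrank_ker (eqP (row_free_orthogonal nza nze ae)).
  by have := rank_leq_row P; lia.
split.
  split; first by rewrite /P mulmxBl !mulmxBr !mulmx1 mul1mx QQ subrr subr0.
  by rewrite /adjmx map_trmx trmxCB trmxC1 adjQ.
rewrite QE; left; apply: (@not_corner_connected_eigenrow _ _ _ _ a b (a ^t* *m e)) => //.
  move=> _ /sandwichP[X XS ->]; exists ((a *m X *m a ^t*) 0 0 / dotmx a a).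
  rewrite !mulmxA aQ mulmxDr (@rank1_proj_orth _ _ e) ?addr0; last by rewrite eE aSb.
  rewrite -scalemxAr mulmxA {1}[a *m X *m _]mx11_scalar mul_scalar_mx scalerA mulrC //.
rewrite !mulmxA aQ -!mulmxA Qb -eE !mulmxA -(mulmxA (a *m _)) !mulmx_trmxC.
by rewrite -scalar_mxM fmorph_eq0 mulf_neq0 ?dnorm_eq0.
Qed.

Theorem proposition4p6 (R : realType) (n : nat) (S : {vspace 'M[R[i]]_n}) :
  quantum_graph S ->
  (k_connected S n.-1 <->
   forall A B : 'M[R[i]]_n, A != 0 -> B != 0 -> sandwich A B S != 0%VS).
Proof.
case=> _ S1; split=> [kS A B nzA nzB | SAB P [[PP _] /= sepP]].
  apply/negP => /eqP/(sandwich_eq0_row_col nzA nzB)[a [b [nza nzb aSb]]].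
  have [P sepP rkP] := separator_of_annihilated S1 nza nzb aSb.
  by have := kS P sepP; lia.
rewrite leqNgt; apply/negP => rkP; set Q := 1%:M - P in sepP.
have QQ : Q *m Q = Q by rewrite mulmxBl !mulmxBr !mulmx1 mul1mx PP subrr subr0.
have rkQ : (2 <= \rank Q)%N.
  by have := mxrank_add P Q; rewrite addrC subrK mxrank1; lia.
have QT : Q \in sandwich Q Q S by have := mem_sandwich Q Q S1; rewrite mulmx1 QQ.
have irrT : corner_irreducible Q (sandwich Q Q S) by apply: corner_irreducible_sandwich.
case: sepP => [ncc | dimT1].
  by apply: ncc; apply: corner_connected_of_irreducible => //; apply/limgS/subvf.
by have := corner_irreducible_dim_neq1 QQ rkQ QT irrT; rewrite dimT1.
Qed.
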